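(* Let $G=(V,E)$ be a finite graph and let $m:V\to\mathbb{Z}_{>0}$ be positive integer weights. Let $\tilde G$ be the graph with vertex set $\{(\alpha,a):\alpha\in V,\ 1\le a\le m_\alpha\}$, in which $(\alpha,a)$ and $(\beta,b)$ are adjacent iff $(\alpha,\beta)\in E$. Then $$\Psi(\tilde G)=\Psi_m(G).$$
   Context: For a finite graph $G=(V,E)$, a ''$G$-representation'' is a family $(O_\alpha)_{\alpha\in V}$ of Hermitian operators on a Hilbert space such that: - $O_\alpha^2=1$ for all $\alpha$; - $O_\alpha O_\beta=-O_\beta O_\alpha$ if $(\alpha,\beta)\in E$; - $O_\alpha O_\beta=O_\beta O_\alpha$ if $\alpha\ne\beta$ and $(\alpha,\beta)\notin E$. For positive weights $m_\alpha$, the weighted $\Psi$ function $\Psi_m(G)$ is the supremum of $\bigl\|\sum_\alpha K_\alpha O_\alpha\bigr\|^2$ over all $G$-representations and all real $(K_\alpha)$ with $\sum_\alpha K_\alpha^2/m_\alpha=1$; here $\|\cdot\|$ is the operator norm. The invariant $\Psi(G)$ is $\Psi_m(G)$ with all $m_\alpha=1$, i.e. the supremum of $\|\sum_\alpha J_\alpha O_\alpha\|^2$ over $G$-representations and real unit vectors $\vec J$. *)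

From HB Require Import structures.
From mathcomp Require Import all_boot all_order all_algebra.
From mathcomp Require Import classical_sets reals.
From mathcomp.real_closed Require Import complex.
Set Implicit Arguments. Unset Strict Implicit. Unset Printing Implicit Defensive.
Import Order.TTheory GRing.Theory Num.Theory.
Local Open Scope ring_scope.
Local Open Scope classical_set_scope.

Record hilbert (R : realType) : Type := Hilbert {
  hcarrier :> lmodType R[i];
  hinner : hcarrier -> hcarrier -> R[i];
  hinnerDl : forall (a : R[i]) (x y z : hcarrier),
      hinner (a *: x + y) z = a * hinner x z + hinner y z;
  hinnerC : forall x y : hcarrier, hinner y x = conjc (hinner x y);
  hinner_ge0 : forall x : hcarrier, 0 <= hinner x x;
  hinner_eq0 : forall x : hcarrier, hinner x x = 0 -> x = 0;
  hcomplete : forall u : nat -> hcarrier,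
      (forall eps : R, 0 < eps -> exists N : nat, forall m n : nat,
          (N <= m)%N -> (N <= n)%N ->
          Num.sqrt (complex.Re (hinner (u m - u n) (u m - u n))) < eps) ->
      exists l : hcarrier, forall eps : R, 0 < eps -> exists N : nat,
          forall n : nat, (N <= n)%N ->
          Num.sqrt (complex.Re (hinner (u n - l) (u n - l))) < eps
}.

Section Defs.
Variable R : realType.

Definition hnorm (H : hilbert R) (x : H) : R :=
  Num.sqrt (complex.Re (hinner x x)).

Definition opnorm (H : hilbert R) (T : H -> H) : R :=
  sup [set hnorm (T x) | x in [set x : H | hnorm x <= 1]].

Definition is_grep (V : finType) (E : rel V) (H : hilbert R) (O : V -> H -> H) :=
  [/\ (forall a (c : R[i]) (x y : H), O a (c *: x + y) = c *: O a x + O a y),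
      (forall a (x y : H), hinner (O a x) y = hinner x (O a y)),
      (forall a (x : H), O a (O a x) = x),
      (forall a b, E a b -> forall x : H, O a (O b x) = - O b (O a x)) &
      (forall a b, a != b -> ~~ E a b -> forall x : H, O a (O b x) = O b (O a x))].

Definition Psi_m (V : finType) (E : rel V) (m : V -> R) : R :=
  sup [set r : R | exists (H : hilbert R) (O : V -> H -> H) (K : V -> R),
         [/\ is_grep E O,
             \sum_(a : V) K a ^+ 2 / m a = 1 &
             r = opnorm (fun x : H => \sum_(a : V) (K a)%:C%C *: O a x) ^+ 2]].

Definition Psi (V : finType) (E : rel V) : R := Psi_m E (fun _ => 1).

End Defs.

(* The blown-up graph G~: vertices (alpha, a) with a < m alpha
   (0-based copy index), adjacency inherited from E. *)
Definition blowup_vertex (V : finType) (m : V -> nat) : finType :=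
  {alpha : V & 'I_(m alpha)}.
Definition blowup_rel (V : finType) (E : rel V) (m : V -> nat) :
  rel (blowup_vertex m) := fun x y => E (tag x) (tag y).
Arguments blowup_vertex : clear implicits.
Arguments blowup_rel : clear implicits.
Arguments Psi : clear implicits.
Arguments Psi_m : clear implicits.

(* Copying every operator [O_alpha] of a G-representation [m_alpha] times gives a
   G~-representation, and the coefficients [K_alpha / m_alpha] on the copies turn the
   constraint [\sum K_alpha^2 / m_alpha = 1] into a unit vector, so Psi_m(G) <= Psi(G~).
   Conversely, let [O] be a G~-representation and [J] a unit vector, and put
   [K_alpha = \sum_a |J_(alpha,a)|]; by Cauchy-Schwarz [\sum K_alpha^2 / m_alpha <= 1].
   Averaging over all ways [c] of picking one copy [c alpha] of each vertex, with the
   product weights [\prod_alpha |J_(c alpha)| / K_alpha], writes [\sum_x J_x O_x] as a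
   convex combination of the operators [\sum_alpha (+/-) K_alpha O_(c alpha)], each of
   which comes from a G-representation. Convexity of the squared norm then bounds
   Psi(G~) by Psi_m(G). *)

From HB Require Import structures.
From mathcomp Require Import all_boot all_order all_algebra.
From mathcomp Require Import classical_sets reals boolp.
From mathcomp.real_closed Require Import complex.
From mathcomp Require Import ring.
Set Implicit Arguments. Unset Strict Implicit. Unset Printing Implicit Defensive.
Import Order.TTheory GRing.Theory Num.Theory.
Local Open Scope ring_scope.
Local Open Scope classical_set_scope.

Section RealInner.
Variables (R : realType) (H : hilbert R).
Implicit Types (x y z : H) (a : R).

Lemma hinnerD x y z : hinner (x + y) z = hinner x z + hinner y z.
Proof. by have := hinnerDl 1 x y z; rewrite scale1r mul1r. Qed.

Lemma hinner0l z : hinner 0 z = 0.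
Proof. by apply: (addrI (hinner 0 z)); rewrite -hinnerD !addr0. Qed.

Lemma hinnerZ (c : R[i]) x z : hinner (c *: x) z = c * hinner x z.
Proof. by have := hinnerDl c x 0 z; rewrite !addr0 hinner0l addr0. Qed.

(* All scalars below are real, and [hnorm x = sqrt (rinner x x)], so the real part of
   the inner product is all that is needed. *)
Definition rinner x y := complex.Re (hinner x y).

Lemma rinnerDl x y z : rinner (x + y) z = rinner x z + rinner y z.
Proof. by rewrite /rinner hinnerD; case: (hinner x z); case: (hinner y z). Qed.

Lemma rinnerZl a x y : rinner (a%:C%C *: x) y = a * rinner x y.
Proof. by rewrite /rinner hinnerZ; case: (hinner x y) => p q /=; rewrite mul0r subr0. Qed.

Lemma rinnerC x y : rinner x y = rinner y x.
Proof. by rewrite /rinner hinnerC; case: (hinner y x). Qed.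

Lemma rinner0l y : rinner 0 y = 0.
Proof. by rewrite /rinner hinner0l. Qed.

Lemma rinnerNl x y : rinner (- x) y = - rinner x y.
Proof. by rewrite -scaleN1r -(rmorphN1 (real_complex R)) rinnerZl mulN1r. Qed.

Lemma rinnerDr x y z : rinner z (x + y) = rinner z x + rinner z y.
Proof. by rewrite !(rinnerC z) rinnerDl. Qed.

Lemma rinnerNr x y : rinner y (- x) = - rinner y x.
Proof. by rewrite !(rinnerC y) rinnerNl. Qed.

Lemma rinnerZZ a x : rinner (a%:C%C *: x) (a%:C%C *: x) = a ^+ 2 * rinner x x.
Proof. by rewrite rinnerZl rinnerC rinnerZl mulrA -expr2. Qed.

Lemma rinner_ge0 x : 0 <= rinner x x.
Proof. by have := hinner_ge0 x; rewrite lecE => /andP[]. Qed.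

Lemma rinner_suml (I : finType) (P : pred I) (v : I -> H) y :
  rinner (\sum_(i | P i) v i) y = \sum_(i | P i) rinner (v i) y.
Proof. by apply: (big_morph (rinner^~ y)) => [x z|]; rewrite ?rinnerDl ?rinner0l. Qed.

Lemma hnorm_le1 x : (hnorm x <= 1) = (rinner x x <= 1).
Proof. by rewrite -[X in _ <= X]sqrtr1 ler_sqrt. Qed.

(* Variance identity [\sum l_i |v_i - u|^2 = \sum l_i |v_i|^2 - |u|^2] for the
   barycentre [u]. *)
Lemma rinner_convex_le (I : finType) (P : pred I) (l : I -> R) (v : I -> H) :
  (forall i, P i -> 0 <= l i) -> \sum_(i | P i) l i = 1 ->
  rinner (\sum_(i | P i) (l i)%:C%C *: v i) (\sum_(i | P i) (l i)%:C%C *: v i)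
    <= \sum_(i | P i) l i * rinner (v i) (v i).
Proof.
move=> l_ge0 l_sum1; set u := \sum_(i | P i) _.
have uu : rinner u u = \sum_(i | P i) l i * rinner (v i) u.
  by rewrite {1}/u rinner_suml; apply: eq_bigr => i _; rewrite rinnerZl.
have variance : \sum_(i | P i) l i * rinner (v i - u) (v i - u) =
    \sum_(i | P i) l i * rinner (v i) (v i) - rinner u u.
  transitivity (\sum_(i | P i) (l i * rinner (v i) (v i)
                 - 2%:R * (l i * rinner (v i) u) + l i * rinner u u)).
    apply: eq_bigr => i _.
    rewrite !(rinnerDl, rinnerDr, rinnerNl, rinnerNr) opprK (rinnerC u); ring.
  by rewrite big_split sumrB /= -big_distrr -big_distrl /= l_sum1 -uu; ring.
rewrite -subr_ge0 -variance; apply: sumr_ge0 => i Pi.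
exact: mulr_ge0 (l_ge0 i Pi) (rinner_ge0 _).
Qed.

Lemma rinner_sum_le_card (I : finType) (v : I -> H) :
  rinner (\sum_i v i) (\sum_i v i) <= #|I|%:R * \sum_i rinner (v i) (v i).
Proof.
have [I0|I_gt0] := posnP #|I|.
  by rewrite big_pred0 ?rinner0l ?I0 ?mul0r // => i; have := card0_eq I0 i.
set n : R := #|I|%:R; have n_gt0 : 0 < n by rewrite ltr0n.
have -> : \sum_i v i = n%:C%C *: \sum_i (n^-1)%:C%C *: v i.
  rewrite scaler_sumr; apply: eq_bigr => i _.
  by rewrite scalerA -rmorphM divff ?gt_eqF // scale1r.
rewrite rinnerZZ.
have l_sum1 : \sum_(i : I) n^-1 = 1 by rewrite sumr_const -mulr_natr mulVf ?gt_eqF.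
apply: le_trans (ler_wpM2l (sqr_ge0 n) (rinner_convex_le _ _ l_sum1)) _.
  by move=> i _; rewrite invr_ge0 ltW.
by rewrite -big_distrr /= mulrA expr2 mulfK ?gt_eqF.
Qed.

Section OpNormBound.
Variables (S : H -> H) (c : R).
Hypothesis S_le : forall y, rinner y y <= 1 -> rinner (S y) (S y) <= c.

Lemma hnorm_le_opnorm y : rinner y y <= 1 -> hnorm (S y) <= opnorm S.
Proof.
move=> y_le1; apply: ub_le_sup; last by exists y; rewrite //= hnorm_le1.
exists (Num.sqrt c) => _ [x /= x_le1 <-].
by rewrite ler_wsqrtr // S_le -?hnorm_le1.
Qed.

Lemma opnorm_ge0 : 0 <= opnorm S.
Proof. by apply: le_trans (sqrtr_ge0 _) (hnorm_le_opnorm (y := 0) _); rewrite rinner0l. Qed.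

Lemma opnorm_sqr_le : opnorm S ^+ 2 <= c.
Proof.
have c_ge0 : 0 <= c by apply: le_trans (rinner_ge0 _) (S_le (y := 0) _); rewrite rinner0l.
have le_sqrt : opnorm S <= Num.sqrt c.
  apply: ge_sup; first by exists (hnorm (S 0)), 0; rewrite //= hnorm_le1 rinner0l.
  by move=> _ [x /= x_le1 <-]; rewrite ler_sqrt // S_le -?hnorm_le1.
by rewrite -(sqr_sqrtr c_ge0) ler_sqr ?nnegrE ?sqrtr_ge0 ?opnorm_ge0.
Qed.

Lemma rinner_le_opnorm_sqr y : rinner y y <= 1 -> rinner (S y) (S y) <= opnorm S ^+ 2.
Proof.
move=> y_le1; rewrite -(sqr_sqrtr (rinner_ge0 (S y))).
by rewrite ler_sqr ?nnegrE ?sqrtr_ge0 ?opnorm_ge0 ?hnorm_le_opnorm.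
Qed.

End OpNormBound.

End RealInner.

Lemma ler_sum_term (R : numDomainType) (I : finType) (P : pred I) (F : I -> R) i :
  (forall j, P j -> 0 <= F j) -> P i -> F i <= \sum_(j | P j) F j.
Proof.
move=> F_ge0 Pi; rewrite (bigD1 i) //= lerDl.
by apply: sumr_ge0 => j /andP[Pj _]; exact: F_ge0.
Qed.

Lemma sqr_sum_le_card (R : realFieldType) (I : finType) (P : pred I) (f : I -> R) :
  (\sum_(i | P i) f i) ^+ 2 <= #|P|%:R * \sum_(i | P i) f i ^+ 2.
Proof.
set n : R := #|P|%:R; set S1 := \sum_(i | P i) f i; set S2 := \sum_(i | P i) f i ^+ 2.
have sum_const c : \sum_(i | P i) c = n * c by rewrite sumr_const mulr_natl.
have : 0 <= \sum_(i | P i) \sum_(j | P j) (f i - f j) ^+ 2.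
  by apply: sumr_ge0 => i _; apply: sumr_ge0 => j _; exact: sqr_ge0.
have -> : \sum_(i | P i) \sum_(j | P j) (f i - f j) ^+ 2 = 2%:R * (n * S2 - S1 ^+ 2).
  transitivity (\sum_(i | P i) (n * f i ^+ 2 + S2 - 2%:R * f i * S1)).
    apply: eq_bigr => i _.
    rewrite (eq_bigr (fun j => f i ^+ 2 + f j ^+ 2 - 2%:R * f i * f j)) => [|j _].
      by rewrite sumrB big_split /= sum_const -big_distrr.
    by ring.
  rewrite sumrB big_split /= sum_const -big_distrr -!big_distrl -big_distrr -/S1 -/S2 /=.
  by ring.
by rewrite pmulr_rge0 ?ltr0Sn // subr_ge0.
Qed.

Definition opsum (R : realType) (V : finType) (H : hilbert R)
    (O : V -> H -> H) (K : V -> R) (x : H) : H :=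
  \sum_a (K a)%:C%C *: O a x.

Section GRepresentation.
Variables (R : realType) (V : finType) (E : rel V) (H : hilbert R) (O : V -> H -> H).
Hypothesis O_grep : is_grep E O.

Lemma grep_rinner a y : rinner (O a y) (O a y) = rinner y y.
Proof. by case: O_grep => _ adj inv _ _; rewrite /rinner adj inv. Qed.

Lemma rinner_opsum_le_card (K : V -> R) y : rinner y y <= 1 ->
  rinner (opsum O K y) (opsum O K y) <= #|V|%:R * \sum_a K a ^+ 2.
Proof.
move=> y_le1; apply: le_trans (rinner_sum_le_card _) _.
apply: ler_wpM2l; first exact: ler0n.
by apply: ler_sum => a _; rewrite rinnerZZ grep_rinner ler_piMr ?sqr_ge0.
Qed.

End GRepresentation.

Section WeightedPsi.
Variables (R : realType) (V : finType) (E : rel V) (w : V -> R).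

Lemma Psi_m_ge0 : 0 <= Psi_m R V E w.
Proof.
rewrite /Psi_m; set S := [set r | _]; have [S_sup|] := pselect (has_sup S).
  have [r Sr] := S_sup.1; apply: le_trans (sup_upper_bound S_sup Sr).
  by case: Sr => [H [O [K [_ _ ->]]]]; exact: sqr_ge0.
by move/sup_out ->.
Qed.

Lemma Psi_m_le c : 0 <= c ->
  (forall (H : hilbert R) (O : V -> H -> H) (K : V -> R), is_grep E O ->
     \sum_a K a ^+ 2 / w a = 1 -> opnorm (opsum O K) ^+ 2 <= c) ->
  Psi_m R V E w <= c.
Proof.
move=> c_ge0 le_c; rewrite /Psi_m; set S := [set r | _].
have [S0|S0] := pselect (S !=set0); last by rewrite sup_out // => -[].
by apply: ge_sup => // _ [H [O [K [O_grep K_norm ->]]]]; exact: le_c.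
Qed.

Hypothesis w_gt0 : forall a, 0 < w a.

Lemma opnorm_le_Psi_m (H : hilbert R) (O : V -> H -> H) (K : V -> R) :
  is_grep E O -> \sum_a K a ^+ 2 / w a = 1 -> opnorm (opsum O K) ^+ 2 <= Psi_m R V E w.
Proof.
move=> O_grep K_norm; apply: ub_le_sup; last by exists H, O, K.
exists (#|V|%:R * \sum_a w a) => _ [H' [O' [K' [O'_grep K'_norm ->]]]].
apply: opnorm_sqr_le => y y_le1; apply: le_trans (rinner_opsum_le_card _ _ y_le1) _.
  exact: O'_grep.
apply: ler_wpM2l => //; apply: ler_sum => a _.
rewrite -[X in _ <= X]mul1r -ler_pdivrMr // -K'_norm.
apply: (@ler_sum_term _ _ xpredT (fun b => K' b ^+ 2 / w b)) => // b _.
by rewrite divr_ge0 ?sqr_ge0 ?ltW.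
Qed.

Lemma rinner_opsum_le_Psi_m (H : hilbert R) (O : V -> H -> H) (K : V -> R) y :
  is_grep E O -> \sum_a K a ^+ 2 / w a <= 1 -> rinner y y <= 1 ->
  rinner (opsum O K y) (opsum O K y) <= Psi_m R V E w.
Proof.
move=> O_grep K_le1 y_le1; set rho := \sum_a K a ^+ 2 / w a in K_le1.
have term_ge0 a : 0 <= K a ^+ 2 / w a by rewrite divr_ge0 ?sqr_ge0 ?ltW.
have [rho0|rho_neq0] := eqVneq rho 0.
  have K0 a : K a = 0.
    have /eqP := psumr_eq0P (fun b _ => term_ge0 b) rho0 isT (i := a).
    by rewrite mulf_eq0 invr_eq0 (gt_eqF (w_gt0 a)) orbF sqrf_eq0 => /eqP.
  rewrite /opsum big1 ?rinner0l ?Psi_m_ge0 // => a _.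
  by rewrite K0 scale0r.
have rho_gt0 : 0 < rho by rewrite lt_def rho_neq0 sumr_ge0.
set s := Num.sqrt rho; have s_gt0 : 0 < s by rewrite sqrtr_gt0.
have s2 : s ^+ 2 = rho by rewrite sqr_sqrtr ?ltW.
have -> : opsum O K y = s%:C%C *: opsum O (fun a => K a / s) y.
  rewrite /opsum scaler_sumr; apply: eq_bigr => a _.
  by rewrite scalerA -rmorphM mulrC divfK ?gt_eqF.
rewrite rinnerZZ s2; apply: le_trans (ler_piMl (rinner_ge0 _) K_le1) _.
apply: le_trans (opnorm_le_Psi_m O_grep _).
  exact: rinner_le_opnorm_sqr (rinner_opsum_le_card O_grep _) _ y_le1.
under eq_bigr => a _ do rewrite expr_div_n s2 mulrAC.
by rewrite -big_distrl /= mulfV.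
Qed.

End WeightedPsi.

Section Blowup.
Variables (R : realType) (V : finType) (E : rel V) (m : V -> nat).
Hypothesis m_gt0 : forall a, (0 < m a)%N.

Local Notation X := (blowup_vertex V m).
Local Notation mR a := ((m a)%:R : R).
Local Notation Psi_weighted := (Psi_m R V E (fun a => (m a)%:R)).

Lemma mR_gt0 a : 0 < mR a.
Proof. by rewrite ltr0n. Qed.

Definition is_copy a (x : X) := tag x == a.

Lemma sum_blowup (Z : nmodType) (F : X -> Z) :
  \sum_(x : X) F x = \sum_a \sum_(j : 'I_(m a)) F (Tagged (fun b => 'I_(m b)) j).
Proof. by rewrite (sig_big_dep xpredT (fun _ _ => true)) /=; apply: eq_bigr => -[]. Qed.

Lemma sum_copies_const (Z : nmodType) a (z : Z) : \sum_(x | is_copy a x) z = z *+ m a.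
Proof.
rewrite big_mkcond sum_blowup (bigD1 a) //= /is_copy /= eqxx sumr_const card_ord.
by rewrite big1 ?addr0 // => b /negbTE b_neq_a; rewrite big1 // => j _; rewrite b_neq_a.
Qed.

Lemma card_copies a : #|is_copy a|%:R = mR a.
Proof. by rewrite -sumr_const sum_copies_const. Qed.

Lemma sum_blowup_tag (Z : nmodType) (F : V -> Z) :
  \sum_(x : X) F (tag x) = \sum_a F a *+ m a.
Proof.
rewrite (partition_big (fun x : X => tag x) xpredT) //=; apply: eq_bigr => a _.
by rewrite -sum_copies_const; apply: eq_bigr => x /eqP ->.
Qed.

Lemma Psi_m_le_Psi_blowup : Psi_weighted <= Psi R X (blowup_rel V E m).
Proof.
apply: Psi_m_le; first exact: Psi_m_ge0.
move=> H O K [lin adj inv anti comm] K_norm.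
have lift_grep : is_grep (blowup_rel V E m) (fun x : X => O (tag x)).
  split=> [x|x|x|x y /anti //|x y x_neq_y Exy z].
  - exact: lin.
  - exact: adj.
  - exact: inv.
  - by have [->|/comm ->] := eqVneq (tag x) (tag y).
have -> : opsum O K = opsum (fun x : X => O (tag x)) (fun x => K (tag x) / mR (tag x)).
  apply: funext => z.
  rewrite /opsum (sum_blowup_tag (fun a => (K a / mR a)%:C%C *: O a z)).
  apply: eq_bigr => a _.
  by rewrite scalerMnl -rmorphMn -mulr_natr divfK ?gt_eqF ?mR_gt0.
apply: opnorm_le_Psi_m lift_grep _ => [x|]; first exact: ltr01.
rewrite (sum_blowup_tag (fun a => (K a / mR a) ^+ 2 / 1)) -[RHS]K_norm.
apply: eq_bigr => a _; rewrite -mulr_natr; field.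
by rewrite gt_eqF ?mR_gt0.
Qed.

Section ChoiceAverage.
Variable J : X -> R.
Implicit Type c : {ffun V -> X}.

Definition copy_mass a := \sum_(x | is_copy a x) `|J x|.

(* If all copies of [a] carry zero weight, any distribution works; take the uniform one. *)
Definition copy_weight a x :=
  if copy_mass a == 0 then (mR a)^-1 else `|J x| / copy_mass a.

Definition choice_weight c := \prod_a copy_weight a (c a).

Definition choice_coef c a := copy_mass a * Num.sg (J (c a)).

Lemma copy_mass_ge0 a : 0 <= copy_mass a.
Proof. by apply: sumr_ge0 => x _; exact: normr_ge0. Qed.

Lemma copy_weight_ge0 a x : 0 <= copy_weight a x.
Proof.
rewrite /copy_weight; case: ifP => _; first by rewrite invr_ge0 ler0n.
by rewrite divr_ge0 ?normr_ge0 ?copy_mass_ge0.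
Qed.

Lemma sum_copy_weight a : \sum_(x | is_copy a x) copy_weight a x = 1.
Proof.
rewrite /copy_weight; have [mass0|mass_neq0] := eqVneq (copy_mass a) 0.
  by rewrite sum_copies_const -[LHS]mulr_natr mulVf ?gt_eqF ?mR_gt0.
by rewrite -big_distrl /= mulfV.
Qed.

Lemma copy_weight_coef x :
  copy_weight (tag x) x * (copy_mass (tag x) * Num.sg (J x)) = J x.
Proof.
have Jx_le : `|J x| <= copy_mass (tag x).
  by apply: (@ler_sum_term _ _ (is_copy (tag x)) (fun z => `|J z|)); rewrite /is_copy.
rewrite /copy_weight; have [mass0|mass_neq0] := eqVneq (copy_mass (tag x)) 0.
  by move: Jx_le; rewrite mass0 normr_le0 => /eqP ->; rewrite !mul0r mulr0.
by rewrite mulrA divfK // mulrC mulr_sg_norm.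
Qed.

Lemma sum_choice_weight : \sum_(c in family is_copy) choice_weight c = 1.
Proof.
rewrite -(bigA_distr_big_dep _ copy_weight).
by rewrite big1 // => a _; exact: sum_copy_weight.
Qed.

Lemma sum_choice_weight_at a x :
  \sum_(c in family is_copy) choice_weight c * (c a == x)%:R =
    (is_copy a x)%:R * copy_weight a x.
Proof.
pose F b z := copy_weight b z * (if b == a then (z == x)%:R else 1).
have factor c : choice_weight c * (c a == x)%:R = \prod_b F b (c b).
  rewrite /F big_split /=; congr (_ * _).
  by rewrite (bigD1 a) //= eqxx big1 ?mulr1 // => b /negbTE ->.
rewrite (eq_bigr _ (fun c _ => factor c)) -(bigA_distr_big_dep _ F) (bigD1 a) //=.
rewrite [X in _ * X]big1 ?mulr1 => [|b b_neq_a]; last first.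
  rewrite /F (negbTE b_neq_a); under eq_bigr do rewrite mulr1.
  exact: sum_copy_weight.
rewrite /F eqxx.
have [copy_x|not_copy] := boolP (is_copy a x).
  rewrite (bigD1 x) //= eqxx mulr1 big1 ?addr0 ?mul1r // => z /andP[_ /negbTE ->].
  by rewrite mulr0.
rewrite big1 ?mul0r // => z copy_z; rewrite (_ : (z == x) = false) ?mulr0 //.
by apply: contraNF not_copy => /eqP <-.
Qed.

End ChoiceAverage.

Lemma opsum_choice_average (H : hilbert R) (O : X -> H -> H) (J : X -> R) y :
  opsum O J y = \sum_(c in family is_copy)
    (choice_weight J c)%:C%C *: opsum (fun a => O (c a)) (choice_coef J c) y.
Proof.
pose g a (z : X) := (copy_mass J a * Num.sg (J z))%:C%C *: O z y.
have marginal a : \sum_(c in family is_copy) (choice_weight J c)%:C%C *: g a (c a) =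
    \sum_(x | is_copy a x) (copy_weight J a x)%:C%C *: g a x.
  transitivity (\sum_(c in family is_copy)
      \sum_x (choice_weight J c * (c a == x)%:R)%:C%C *: g a x).
    apply: eq_bigr => c _; rewrite (bigD1 (c a)) //= eqxx mulr1 big1 ?addr0 // => x.
    by rewrite eq_sym => /negbTE ->; rewrite mulr0 scale0r.
  rewrite exchange_big [RHS]big_mkcond /=; apply: eq_bigr => x _.
  rewrite -scaler_suml -rmorph_sum sum_choice_weight_at.
  by case: ifP => _; rewrite ?mul1r ?mul0r ?scale0r.
transitivity (\sum_a \sum_(x | is_copy a x) (copy_weight J a x)%:C%C *: g a x).
  rewrite /opsum (partition_big (fun x : X => tag x) xpredT) //=.
  apply: eq_bigr => a _; apply: eq_big => // x /eqP <-.
  by rewrite /g scalerA -rmorphM copy_weight_coef.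
under [RHS]eq_bigr do rewrite /opsum scaler_sumr.
by rewrite [RHS]exchange_big; apply: eq_bigr => a _; rewrite -marginal.
Qed.

Lemma sum_copy_mass_sqr_le (J : X -> R) :
  \sum_a copy_mass J a ^+ 2 / mR a <= \sum_x J x ^+ 2.
Proof.
rewrite (partition_big (fun x : X => tag x) xpredT) //=; apply: ler_sum => a _.
rewrite ler_pdivrMr ?mR_gt0 // mulrC -(card_copies a).
apply: le_trans (sqr_sum_le_card (is_copy a) (fun x => `|J x|)) _.
rewrite (eq_bigr (fun x => J x ^+ 2)) => [|x _]; first exact: lexx.
exact: real_normK (num_real _).
Qed.

Lemma choice_grep (H : hilbert R) (O : X -> H -> H) (c : {ffun V -> X}) :
  is_grep (blowup_rel V E m) O -> c \in family is_copy -> is_grep E (fun a => O (c a)).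
Proof.
move=> [lin adj inv anti comm] /familyP c_copy.
have tag_c a : tag (c a) = a by apply/eqP; exact: c_copy.
split=> [a|a|a|a b Eab|a b a_neq_b not_Eab].
- exact: lin.
- exact: adj.
- exact: inv.
- by apply: anti; rewrite /blowup_rel !tag_c.
- apply: comm; last by rewrite /blowup_rel !tag_c.
  by apply: contra_neq a_neq_b => /(congr1 tag); rewrite !tag_c.
Qed.

Lemma rinner_opsum_blowup_le (H : hilbert R) (O : X -> H -> H) (J : X -> R) y :
  is_grep (blowup_rel V E m) O -> \sum_x J x ^+ 2 / 1 = 1 -> rinner y y <= 1 ->
  rinner (opsum O J y) (opsum O J y) <= Psi_weighted.
Proof.
move=> O_grep J_norm y_le1.
have mass_le1 : \sum_a copy_mass J a ^+ 2 / mR a <= 1.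
  apply: le_trans (sum_copy_mass_sqr_le J) _.
  by rewrite -[leRHS]J_norm; under [leRHS]eq_bigr do rewrite divr1.
have choice_le c : c \in family is_copy ->
    rinner (opsum (fun a => O (c a)) (choice_coef J c) y)
           (opsum (fun a => O (c a)) (choice_coef J c) y) <= Psi_weighted.
  move=> c_copy; apply: rinner_opsum_le_Psi_m (choice_grep O_grep c_copy) _ y_le1.
    exact: mR_gt0.
  apply: le_trans mass_le1; apply: ler_sum => a _.
  rewrite exprMn sqr_sg ler_wpM2r ?invr_ge0 ?ler0n // ler_piMr ?sqr_ge0 //.
  by case: (_ != 0).
have weight_ge0 c : 0 <= choice_weight J c.
  by apply: prodr_ge0 => a _; exact: copy_weight_ge0.
rewrite opsum_choice_average.
apply: le_trans (rinner_convex_le _ _ (sum_choice_weight J)) _ => [c _ //|].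
apply: le_trans (_ : _ <= \sum_(c in family is_copy) choice_weight J c * Psi_weighted) _.
  by apply: ler_sum => c c_copy; rewrite ler_wpM2l ?choice_le.
by rewrite -big_distrl /= sum_choice_weight mul1r.
Qed.

Lemma Psi_blowup_le_Psi_m : Psi R X (blowup_rel V E m) <= Psi_weighted.
Proof.
apply: Psi_m_le; first exact: Psi_m_ge0.
move=> H O J O_grep J_norm; apply: opnorm_sqr_le => y.
exact: rinner_opsum_blowup_le.
Qed.

End Blowup.

Theorem mainTheorem7 (R : realType) (V : finType) (E : rel V)
  (Esym : symmetric E) (Eirr : irreflexive E)
  (m : V -> nat) (m_pos : forall alpha, (0 < m alpha)%N) :
  Psi R (blowup_vertex V m) (blowup_rel V E m) = Psi_m R V E (fun alpha => (m alpha)%:R).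
Proof.
apply/le_anti/andP; split.
- exact: (Psi_blowup_le_Psi_m R E m_pos).
- exact: (Psi_m_le_Psi_blowup R E m_pos).
Qed.
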